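(* Let $r\ge 2$ and define $\phi_r:\mathbb{R}\times\mathbb{R}\to\mathbb{R}$ by $$\phi_r(a,b)=\frac{1}{r}\Big[a_+^r b_+^r+|a_-|^r+|b_-|^r\Big].$$ Then: 1) For any $r\ge 2$, $\phi_r$ is continuously differentiable on $\mathbb{R}\times\mathbb{R}$ with $$\nabla\phi_r(a,b)=\begin{bmatrix} a_+^{r-1}b_+^r-|a_-|^{r-1}\\ a_+^r b_+^{r-1}-|b_-|^{r-1}\end{bmatrix}.$$ Moreover, $\nabla\phi_r(a,b)=0$ if and only if $\phi_r(a,b)=0$. 2) For any $r>2$, $\phi_r$ is twice continuously differentiable on $\mathbb{R}\times\mathbb{R}$ with $$\nabla^2\phi_r(a,b)=\begin{bmatrix}(r-1)(a_+^{r-2}b_+^r+|a_-|^{r-2}) & r\,a_+^{r-1}b_+^{r-1}\\ r\,a_+^{r-1}b_+^{r-1} & (r-1)(a_+^r b_+^{r-2}+|b_-|^{r-2})\end{bmatrix}.$$ 3) For $r=2$, the generalized Hessian of $\phi_2$ at any $(a,b)\in\mathbb{R}\times\mathbb{R}$ satisfies $$\partial\nabla\phi_2(a,b)\subseteq\left\{\begin{bmatrix}u & 2a_+b_+\\ 2a_+b_+ & v\end{bmatrix}:\ u\in\Xi(a,b),\ v\in\Xi(b,a)\right\}.$$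
   Context: For $a\in\mathbb{R}$, $a_+:=\max\{a,0\}$ and $a_-:=\min\{a,0\}$; $a_+^r$ means $(a_+)^r$. The set $\Xi(a,b)\subseteq\mathbb{R}$ is defined by $\Xi(a,b)=\{b_+^2\}$ if $a>0$, $\Xi(a,b)=\mathrm{co}\{1,b_+^2\}$ (the closed interval between $1$ and $b_+^2$) if $a=0$, and $\Xi(a,b)=\{1\}$ if $a<0$. For a locally Lipschitz map $F:\mathbb{R}^n\to\mathbb{R}^m$, the (Clarke) generalized Jacobian is $\partial F(x)=\mathrm{co}\{\lim \nabla F(x^k): x^k\to x,\ x^k\in D_F\}$, where $D_F$ is the set of points where $F$ is differentiable; for a continuously differentiable function $\varphi$, its generalized Hessian is $\partial\nabla\varphi(x)$, the generalized Jacobian of $\nabla\varphi$. *)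

From Stdlib Require Import Reals Lra List.
From Coquelicot Require Import Coquelicot.
Open Scope R_scope.

(* x^r for x >= 0 and real r > 0, with the convention 0^r = 0
   (Stdlib's Rpower is only meaningful for positive bases). *)
Definition ppow (x r : R) : R := if Rlt_dec 0 x then Rpower x r else 0.

Definition pospart (a : R) : R := Rmax a 0.
Definition negpart (a : R) : R := Rmin a 0.

Definition phi (r : R) (p : R * R) : R :=
  let a := fst p in let b := snd p in
  / r * (ppow (pospart a) r * ppow (pospart b) r + ppow (Rabs (negpart a)) r
         + ppow (Rabs (negpart b)) r).

Definition grad_phi (r : R) (p : R * R) : R * R :=
  let a := fst p in let b := snd p in
  (ppow (pospart a) (r - 1) * ppow (pospart b) r - ppow (Rabs (negpart a)) (r - 1),
   ppow (pospart a) r * ppow (pospart b) (r - 1) - ppow (Rabs (negpart b)) (r - 1)).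

Record M2 := mkM2 { m11 : R; m12 : R; m21 : R; m22 : R }.

Definition M2_apply (M : M2) (h : R * R) : R * R :=
  (m11 M * fst h + m12 M * snd h, m21 M * fst h + m22 M * snd h).

Definition hess_phi (r : R) (p : R * R) : M2 :=
  let a := fst p in let b := snd p in
  mkM2 ((r - 1) * (ppow (pospart a) (r - 2) * ppow (pospart b) r + ppow (Rabs (negpart a)) (r - 2)))
       (r * ppow (pospart a) (r - 1) * ppow (pospart b) (r - 1))
       (r * ppow (pospart a) (r - 1) * ppow (pospart b) (r - 1))
       ((r - 1) * (ppow (pospart a) r * ppow (pospart b) (r - 2) + ppow (Rabs (negpart b)) (r - 2))).

Definition has_grad (f : R * R -> R) (p : R * R) (g : R * R) : Prop :=
  filterdiff f (locally p) (fun h => fst g * fst h + snd g * snd h).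

Definition has_jac (F : R * R -> R * R) (p : R * R) (J : M2) : Prop :=
  filterdiff F (locally p) (M2_apply J).

Definition M2_continuous (H : R * R -> M2) : Prop :=
  forall p, continuous (fun q => m11 (H q)) p /\ continuous (fun q => m12 (H q)) p
         /\ continuous (fun q => m21 (H q)) p /\ continuous (fun q => m22 (H q)) p.

Definition C1_with_grad (f : R * R -> R) (G : R * R -> R * R) : Prop :=
  (forall p, has_grad f p (G p)) /\ (forall p, continuous G p).

Definition C2_with_hess (f : R * R -> R) (G : R * R -> R * R) (H : R * R -> M2) : Prop :=
  C1_with_grad f G /\ (forall p, has_jac G p (H p)) /\ M2_continuous H.

Definition M2_lim (Js : nat -> M2) (M : M2) : Prop :=
  is_lim_seq (fun k => m11 (Js k)) (m11 M) /\ is_lim_seq (fun k => m12 (Js k)) (m12 M)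
  /\ is_lim_seq (fun k => m21 (Js k)) (m21 M) /\ is_lim_seq (fun k => m22 (Js k)) (m22 M).

Definition limiting_jacobians (F : R * R -> R * R) (x : R * R) (M : M2) : Prop :=
  exists (xs : nat -> R * R) (Js : nat -> M2),
    filterlim xs eventually (locally x) /\
    (forall k, has_jac F (xs k) (Js k)) /\ M2_lim Js M.

Definition M2_zero : M2 := mkM2 0 0 0 0.
Definition M2_add (A B : M2) : M2 :=
  mkM2 (m11 A + m11 B) (m12 A + m12 B) (m21 A + m21 B) (m22 A + m22 B).
Definition M2_scale (c : R) (A : M2) : M2 :=
  mkM2 (c * m11 A) (c * m12 A) (c * m21 A) (c * m22 A).

Definition M2_co (S : M2 -> Prop) (M : M2) : Prop :=
  exists l : list (R * M2)%type,
    List.Forall (fun wA => 0 <= fst wA /\ S (snd wA)) l /\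
    fold_right Rplus 0 (map fst l) = 1 /\
    M = fold_right (fun wA acc => M2_add (M2_scale (fst wA) (snd wA)) acc) M2_zero l.

Definition clarke_jac (F : R * R -> R * R) (x : R * R) (M : M2) : Prop :=
  M2_co (limiting_jacobians F x) M.

Definition Xi (a b : R) (u : R) : Prop :=
  (a > 0 /\ u = (pospart b) ^ 2) \/
  (a = 0 /\ Rmin 1 ((pospart b) ^ 2) <= u <= Rmax 1 ((pospart b) ^ 2)) \/
  (a < 0 /\ u = 1).

From Stdlib Require Import Reals Lra List.
From Coquelicot Require Import Coquelicot.
Open Scope R_scope.

(* Write x_+^s for the positive-part power, with 0^s = 0.  Then
   phi_r(a,b) = (1/r) [a_+^r b_+^r + (-a)_+^r + (-b)_+^r], and x |-> x_+^s is continuous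
   for s > 0 and differentiable with derivative s x_+^(s-1) for s > 1 (at 0 because
   x_+^s = x x_+^(s-1)).  So phi_r, the entries of its gradient and those of its Hessian
   all have the shape f(a) g(b) + h(a) + k(b) with one-variable pieces that are
   differentiable, resp. continuous, when r >= 2, resp. r > 2.

   For r = 2, along the a-direction the first component of the gradient is
   t |-> t_+ b_+^2 - (-t)_+, whose right derivative at a is b_+^2 if a >= 0 and 1 if a < 0;
   hence at every point of differentiability the (1,1) entry of the Jacobian is b_+^2 or 1,
   with the choice forced when a <> 0, and the off-diagonal entries are 2 a_+ b_+.  Along a
   sequence tending to a point with a = 0 the limit u of the (1,1) entries satisfies
   (u - 1)(u - b_+^2) = 0.  Finally Xi(a,b) is an interval, so it is stable under the
   convex combinations defining the Clarke Jacobian. *)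

(** * Positive-part powers *)

Definition pospow (s x : R) : R := ppow (pospart x) s.

Lemma pospow_pos s x : 0 < x -> pospow s x = Rpower x s.
Proof.
  intros Hx. unfold pospow, ppow, pospart. rewrite Rmax_left by lra.
  destruct (Rlt_dec 0 x); [reflexivity | lra].
Qed.

Lemma pospow_npos s x : x <= 0 -> pospow s x = 0.
Proof.
  intros Hx. unfold pospow, ppow, pospart. rewrite Rmax_right by lra.
  destruct (Rlt_dec 0 0); [lra | reflexivity].
Qed.

Lemma pospow_gt0 s x : 0 < x -> 0 < pospow s x.
Proof. intros Hx. rewrite pospow_pos by exact Hx. apply exp_pos. Qed.

Lemma pospow_ge0 s x : 0 <= pospow s x.
Proof.
  destruct (Rlt_or_le 0 x) as [Hx | Hx].
  - left; apply pospow_gt0, Hx.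
  - rewrite pospow_npos by exact Hx. lra.
Qed.

Lemma pospow_eq0 s x : pospow s x = 0 <-> x <= 0.
Proof.
  split; [|apply pospow_npos].
  intros H. destruct (Rlt_or_le 0 x) as [Hx | Hx]; [|exact Hx].
  pose proof (pospow_gt0 s x Hx). lra.
Qed.

Lemma pospow_mul_eq0 s t x y : pospow s x * pospow t y = 0 <-> x <= 0 \/ y <= 0.
Proof.
  rewrite <- (pospow_eq0 s x), <- (pospow_eq0 t y). split.
  - apply Rmult_integral.
  - intros [-> | ->]; ring.
Qed.

Lemma pospow_1 x : pospow 1 x = pospart x.
Proof.
  destruct (Rlt_or_le 0 x) as [Hx | Hx].
  - rewrite pospow_pos, Rpower_1 by exact Hx. unfold pospart. rewrite Rmax_left; lra.
  - rewrite pospow_npos by exact Hx. unfold pospart. rewrite Rmax_right; lra.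
Qed.

Lemma pospow_2 x : pospow 2 x = pospart x ^ 2.
Proof.
  destruct (Rlt_or_le 0 x) as [Hx | Hx].
  - rewrite pospow_pos by exact Hx. replace 2 with (INR 2) at 1 by (simpl; ring).
    rewrite Rpower_pow by exact Hx. unfold pospart. rewrite Rmax_left; lra.
  - rewrite pospow_npos by exact Hx. unfold pospart. rewrite Rmax_right by lra. ring.
Qed.

Lemma pospow_succ s x : pospow (s + 1) x = x * pospow s x.
Proof.
  destruct (Rlt_or_le 0 x) as [Hx | Hx].
  - rewrite !pospow_pos, Rpower_plus, Rpower_1 by exact Hx. ring.
  - rewrite !pospow_npos by exact Hx. ring.
Qed.

Lemma Rabs_negpart x : Rabs (negpart x) = pospart (- x).
Proof.
  unfold negpart, pospart. destruct (Rle_dec x 0).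
  - rewrite Rmin_left, Rmax_left by lra. apply Rabs_left1; lra.
  - rewrite Rmin_right, Rmax_right by lra. apply Rabs_R0.
Qed.

Lemma pospow_small s eps h : 0 < s -> 0 < eps -> Rabs h < Rpower eps (/ s) ->
  pospow s h < eps.
Proof.
  intros Hs Heps Hh. destruct (Rlt_or_le 0 h) as [Hpos | Hnpos].
  - rewrite pospow_pos by exact Hpos. rewrite Rabs_pos_eq in Hh by lra.
    rewrite <- (Rpower_1 eps), <- (Rinv_l s), <- Rpower_mult by lra.
    apply Rlt_Rpower_l; lra.
  - rewrite pospow_npos by exact Hnpos. exact Heps.
Qed.

Lemma locally_pospow_pos s x : 0 < x -> locally x (fun t => pospow s t = Rpower t s).
Proof.
  intros Hx. eapply filter_imp; [|apply (open_gt 0 x Hx)].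
  intros t Ht. apply pospow_pos, Ht.
Qed.

Lemma locally_pospow_neg s x : x < 0 -> locally x (fun t => pospow s t = 0).
Proof.
  intros Hx. eapply filter_imp; [|apply (open_lt 0 x Hx)].
  intros t Ht. apply pospow_npos. simpl in Ht. lra.
Qed.

Lemma pospow_continuous s x : 0 < s -> continuous (pospow s) x.
Proof.
  intros Hs. destruct (Rtotal_order x 0) as [Hx | [-> | Hx]].
  - apply (continuous_ext_loc _ (fun _ => 0)).
    + eapply filter_imp; [|apply (locally_pospow_neg s x Hx)]. intros t Ht. now rewrite Ht.
    + apply continuous_const.
  - apply continuity_pt_filterlim. intros eps Heps.
    exists (Rpower eps (/ s)). split; [apply exp_pos|].
    intros y [_ Hy]. simpl in *. unfold R_dist in *.
    rewrite (pospow_npos s 0), !Rminus_0_r by lra. rewrite Rminus_0_r in Hy.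
    rewrite Rabs_pos_eq by apply pospow_ge0. apply pospow_small; assumption.
  - apply (continuous_ext_loc _ (fun t => Rpower t s)).
    + eapply filter_imp; [|apply (locally_pospow_pos s x Hx)]. intros t Ht. now rewrite Ht.
    + apply (@ex_derive_continuous R_AbsRing R_NormedModule).
      exists (s * Rpower x (s - 1)). apply is_derive_Reals, derivable_pt_lim_power, Hx.
Qed.

Lemma pospow_derive r x : 1 < r -> is_derive (pospow r) x (r * pospow (r - 1) x).
Proof.
  intros Hr. destruct (Rtotal_order x 0) as [Hx | [-> | Hx]].
  - rewrite (pospow_npos _ x), Rmult_0_r by lra.
    apply (is_derive_ext_loc (fun _ => 0)).
    + eapply filter_imp; [|apply (locally_pospow_neg r x Hx)]. intros t Ht. now rewrite Ht.
    + apply (is_derive_const 0).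
  - rewrite (pospow_npos _ 0), Rmult_0_r by lra.
    apply is_derive_Reals. intros eps Heps.
    exists (mkposreal (Rpower eps (/ (r - 1))) (exp_pos _)). intros h Hh0 Hh. simpl in Hh.
    replace r with (r - 1 + 1) at 1 by ring.
    rewrite Rplus_0_l, pospow_succ, (pospow_npos _ 0) by lra.
    replace ((h * pospow (r - 1) h - 0) / h - 0) with (pospow (r - 1) h) by (field; exact Hh0).
    rewrite Rabs_pos_eq by apply pospow_ge0. apply pospow_small; lra.
  - apply (is_derive_ext_loc (fun t => Rpower t r)).
    + eapply filter_imp; [|apply (locally_pospow_pos r x Hx)]. intros t Ht. now rewrite Ht.
    + rewrite pospow_pos by exact Hx. apply is_derive_Reals, derivable_pt_lim_power, Hx.
Qed.

Definition negpow (s x : R) : R := pospow s (- x).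

Lemma negpow_continuous s x : 0 < s -> continuous (negpow s) x.
Proof.
  intros Hs. apply (continuous_comp Ropp (pospow s)).
  - apply (continuous_opp (fun t : R => t)), continuous_id.
  - apply pospow_continuous, Hs.
Qed.

Lemma negpow_derive r x : 1 < r -> is_derive (negpow r) x (- (r * negpow (r - 1) x)).
Proof.
  intros Hr. unfold negpow.
  replace (- (r * pospow (r - 1) (- x))) with (scal (-1) (r * pospow (r - 1) (- x)))
    by (unfold scal; simpl; unfold mult; simpl; ring).
  apply (is_derive_comp (pospow r) Ropp).
  - apply pospow_derive, Hr.
  - apply (is_derive_opp (fun t : R => t)), (is_derive_id x).
Qed.

(** * Functions of the form f(a) g(b) + h(a) + k(b) *)

Lemma continuous_Rmult_l (c : R) (f : R -> R) x :
  continuous f x -> continuous (fun t => c * f t) x.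
Proof. exact (continuous_scal_r c f x). Qed.

Definition prodsum (f g h k : R -> R) (q : R * R) : R :=
  f (fst q) * g (snd q) + h (fst q) + k (snd q).

Lemma filterdiff_comp_fst (f : R -> R) a b d : is_derive f a d ->
  filterdiff (fun q : R * R => f (fst q)) (locally (a, b)) (fun u => d * fst u).
Proof.
  intros Hf. eapply filterdiff_ext_lin.
  - apply (filterdiff_comp' fst f (a, b) fst (fun y => scal y d)).
    + apply filterdiff_linear, is_linear_fst.
    + exact Hf.
  - intros u. unfold scal; simpl. unfold mult; simpl. ring.
Qed.

Lemma filterdiff_comp_snd (f : R -> R) a b d : is_derive f b d ->
  filterdiff (fun q : R * R => f (snd q)) (locally (a, b)) (fun u => d * snd u).
Proof.
  intros Hf. eapply filterdiff_ext_lin.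
  - apply (filterdiff_comp' snd f (a, b) snd (fun y => scal y d)).
    + apply filterdiff_linear, is_linear_snd.
    + exact Hf.
  - intros u. unfold scal; simpl. unfold mult; simpl. ring.
Qed.

Lemma filterdiff_prodsum f g h k a b df dg dh dk :
  is_derive f a df -> is_derive g b dg -> is_derive h a dh -> is_derive k b dk ->
  filterdiff (prodsum f g h k) (locally (a, b))
    (fun u => (df * g b + dh) * fst u + (f a * dg + dk) * snd u).
Proof.
  intros Hf Hg Hh Hk.
  pose proof (filterdiff_mult_fct _ _ (a, b) _ _ Rmult_comm
    (filterdiff_comp_fst f a b df Hf) (filterdiff_comp_snd g a b dg Hg)) as Hfg.
  pose proof (filterdiff_plus_fct _ _ _ _ Hfg (filterdiff_comp_fst h a b dh Hh)) as Hfgh.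
  pose proof (filterdiff_plus_fct _ _ _ _ Hfgh (filterdiff_comp_snd k a b dk Hk)) as H.
  eapply filterdiff_ext_lin; [exact H|].
  intros u. simpl. unfold plus, mult; simpl. ring.
Qed.

Lemma continuous_prodsum f g h k a b :
  continuous f a -> continuous g b -> continuous h a -> continuous k b ->
  continuous (prodsum f g h k) (a, b).
Proof.
  intros Hf Hg Hh Hk.
  assert (Hfst : forall u : R -> R, continuous u a -> continuous (fun q : R * R => u (fst q)) (a, b))
    by (intros u Hu; apply (continuous_comp fst u); [apply continuous_fst | exact Hu]).
  assert (Hsnd : forall u : R -> R, continuous u b -> continuous (fun q : R * R => u (snd q)) (a, b))
    by (intros u Hu; apply (continuous_comp snd u); [apply continuous_snd | exact Hu]).
  apply (continuous_plus (fun q => f (fst q) * g (snd q) + h (fst q)) (fun q => k (snd q))); [|auto].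
  apply (continuous_plus (fun q => f (fst q) * g (snd q))); [|auto].
  apply (continuous_mult (fun q => f (fst q)) (fun q => g (snd q))); auto.
Qed.

Lemma filterdiff_pair {U : NormedModule R_AbsRing} (f g : U -> R) p lf lg :
  filterdiff f (locally p) lf -> filterdiff g (locally p) lg ->
  filterdiff (fun q => (f q, g q)) (locally p) (fun h => (lf h, lg h)).
Proof.
  intros Hf Hg.
  apply (filterdiff_comp_2 f g pair lf lg pair Hf Hg).
  apply filterdiff_linear, is_linear_prod; [apply is_linear_fst | apply is_linear_snd].
Qed.

Lemma continuous_pair {U : UniformSpace} (f g : U -> R) p :
  continuous f p -> continuous g p -> continuous (fun q => (f q, g q)) p.
Proof.
  intros Hf Hg. apply (continuous_comp_2 f g pair p Hf Hg).
  apply (continuous_ext (fun q => q)); [intros []; reflexivity | apply continuous_id].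
Qed.

(** * Gradient and Hessian of phi_r *)

Lemma phi_prodsum r q :
  phi r q = prodsum (fun x => / r * pospow r x) (pospow r)
                    (fun x => / r * negpow r x) (fun x => / r * negpow r x) q.
Proof. unfold phi, prodsum, negpow, pospow. rewrite !Rabs_negpart. ring. Qed.

Lemma grad_phi_prodsum r q :
  grad_phi r q =
  (prodsum (pospow (r - 1)) (pospow r) (fun x => - negpow (r - 1) x) (fun _ => 0) q,
   prodsum (pospow r) (pospow (r - 1)) (fun _ => 0) (fun x => - negpow (r - 1) x) q).
Proof. unfold grad_phi, prodsum, negpow, pospow. rewrite !Rabs_negpart. f_equal; ring. Qed.

Lemma phi_has_grad r p : 1 < r -> has_grad (phi r) p (grad_phi r p).
Proof.
  intros Hr. destruct p as [a b]. unfold has_grad.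
  eapply filterdiff_ext_lin; [eapply filterdiff_ext; [|apply filterdiff_prodsum]|].
  - intros q. symmetry. apply phi_prodsum.
  - apply is_derive_scal, pospow_derive, Hr.
  - apply pospow_derive, Hr.
  - apply is_derive_scal, negpow_derive, Hr.
  - apply is_derive_scal, negpow_derive, Hr.
  - intros u. rewrite grad_phi_prodsum. unfold prodsum. simpl. field. lra.
Qed.

Lemma grad_phi_continuous r p : 1 < r -> continuous (grad_phi r) p.
Proof.
  intros Hr. destruct p as [a b].
  eapply continuous_ext; [intros q; symmetry; apply grad_phi_prodsum|].
  apply continuous_pair; apply continuous_prodsum;
    solve [ apply continuous_const
          | apply pospow_continuous; lra
          | apply (continuous_opp (negpow (r - 1))), negpow_continuous; lra ].
Qed.

Lemma phi_eq0_iff r a b : 0 < r ->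
  phi r (a, b) = 0 <-> 0 <= a /\ 0 <= b /\ (a <= 0 \/ b <= 0).
Proof.
  intros Hr. rewrite phi_prodsum. unfold prodsum, negpow. simpl.
  replace (/ r * pospow r a * pospow r b + / r * pospow r (- a) + / r * pospow r (- b))
    with (/ r * (pospow r a * pospow r b + pospow r (- a) + pospow r (- b))) by ring.
  split.
  - intros H. apply Rmult_integral in H. destruct H as [H | H].
    { pose proof (Rinv_0_lt_compat r Hr). lra. }
    pose proof (Rmult_le_pos _ _ (pospow_ge0 r a) (pospow_ge0 r b)).
    pose proof (pospow_ge0 r (- a)). pose proof (pospow_ge0 r (- b)).
    assert (Ha : - a <= 0) by (apply (pospow_eq0 r); lra).
    assert (Hb : - b <= 0) by (apply (pospow_eq0 r); lra).
    assert (Hab : a <= 0 \/ b <= 0) by (apply (pospow_mul_eq0 r r); lra).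
    repeat split; lra.
  - intros [Ha [Hb Hab]].
    rewrite (pospow_npos r (- a)), (pospow_npos r (- b)) by lra.
    rewrite (proj2 (pospow_mul_eq0 r r a b) Hab). ring.
Qed.

Lemma grad_phi_eq0_iff r a b :
  grad_phi r (a, b) = (0, 0) <-> 0 <= a /\ 0 <= b /\ (a <= 0 \/ b <= 0).
Proof.
  rewrite grad_phi_prodsum. unfold prodsum, negpow. simpl.
  assert (Hneg : forall x, pospow (r - 1) (- x) = 0 <-> 0 <= x)
    by (intros x; rewrite pospow_eq0; lra).
  split.
  - intros H. injection H as H1 H2.
    assert (Ha : 0 <= a).
    { apply Hneg. destruct (Rle_or_lt a 0) as [Ha | Ha].
      - rewrite (pospow_npos (r - 1) a) in H1 by exact Ha. lra.
      - rewrite (pospow_npos (r - 1) (- a)) by lra. reflexivity. }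
    assert (Hb : 0 <= b).
    { apply Hneg. destruct (Rle_or_lt b 0) as [Hb | Hb].
      - rewrite (pospow_npos (r - 1) b) in H2 by exact Hb. lra.
      - rewrite (pospow_npos (r - 1) (- b)) by lra. reflexivity. }
    rewrite (proj2 (Hneg a) Ha) in H1.
    repeat split; try assumption. apply (pospow_mul_eq0 (r - 1) r). lra.
  - intros [Ha [Hb Hab]].
    rewrite (proj2 (Hneg a) Ha), (proj2 (Hneg b) Hb).
    rewrite (proj2 (pospow_mul_eq0 (r - 1) r a b) Hab), (proj2 (pospow_mul_eq0 r (r - 1) a b) Hab).
    f_equal; ring.
Qed.

Lemma hess_phi_prodsum r q :
  hess_phi r q =
  mkM2 (prodsum (fun x => (r - 1) * pospow (r - 2) x) (pospow r)
                (fun x => (r - 1) * negpow (r - 2) x) (fun _ => 0) q)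
       (prodsum (fun x => r * pospow (r - 1) x) (pospow (r - 1)) (fun _ => 0) (fun _ => 0) q)
       (prodsum (fun x => r * pospow (r - 1) x) (pospow (r - 1)) (fun _ => 0) (fun _ => 0) q)
       (prodsum (fun x => (r - 1) * pospow r x) (pospow (r - 2))
                (fun _ => 0) (fun x => (r - 1) * negpow (r - 2) x) q).
Proof. unfold hess_phi, prodsum, negpow, pospow. rewrite !Rabs_negpart. f_equal; ring. Qed.

Lemma grad_phi_has_jac r p : 2 < r -> has_jac (grad_phi r) p (hess_phi r p).
Proof.
  intros Hr. destruct p as [a b]. unfold has_jac.
  assert (Hr1 : 1 < r) by lra. assert (Hr2 : 1 < r - 1) by lra.
  assert (Hneg : forall x, is_derive (fun t => - negpow (r - 1) t) x ((r - 1) * negpow (r - 2) x)).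
  { intros x. replace (r - 2) with (r - 1 - 1) by ring.
    rewrite <- (Ropp_involutive ((r - 1) * _)).
    apply (is_derive_opp (negpow (r - 1))), negpow_derive, Hr2. }
  pose proof (filterdiff_prodsum _ _ _ _ a b _ _ _ _ (pospow_derive (r - 1) a Hr2)
    (pospow_derive r b Hr1) (Hneg a) (is_derive_const 0 b)) as G1.
  pose proof (filterdiff_prodsum _ _ _ _ a b _ _ _ _ (pospow_derive r a Hr1)
    (pospow_derive (r - 1) b Hr2) (is_derive_const 0 a) (Hneg b)) as G2.
  eapply filterdiff_ext_lin;
    [eapply filterdiff_ext; [intros q; symmetry; apply grad_phi_prodsum|]|].
  - exact (filterdiff_pair _ _ _ _ _ G1 G2).
  - intros u. rewrite hess_phi_prodsum. unfold M2_apply, prodsum. simpl.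
    replace (r - 1 - 1) with (r - 2) by ring. unfold zero; simpl. f_equal; ring.
Qed.


Lemma hess_phi_continuous r : 2 < r -> M2_continuous (hess_phi r).
Proof.
  intros Hr [a b].
  repeat split; (eapply continuous_ext; [intros q; rewrite hess_phi_prodsum; reflexivity|]);
    apply continuous_prodsum;
    solve [ apply continuous_const
          | apply pospow_continuous; lra
          | apply continuous_Rmult_l; first [apply pospow_continuous | apply negpow_continuous]; lra ].
Qed.

(** * The generalized Hessian of phi_2 *)

Lemma has_jac_partial_fst F a b J : has_jac F (a, b) J ->
  is_derive (fun t => F (t, b)) a (m11 J, m21 J).
Proof.
  intros HJ. unfold is_derive.
  eapply filterdiff_ext_lin; [apply (filterdiff_comp' (fun t => (t, b)) F a (fun h => (h, 0)))|].
  - apply (filterdiff_pair (fun t => t) (fun _ => b)); [apply filterdiff_id | exact (filterdiff_const b)].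
  - exact HJ.
  - intros h. unfold M2_apply. cbn. unfold prod_scal, scal; simpl. unfold mult; simpl. f_equal; ring.
Qed.

Lemma has_jac_partial_snd F a b J : has_jac F (a, b) J ->
  is_derive (fun t => F (a, t)) b (m12 J, m22 J).
Proof.
  intros HJ. unfold is_derive.
  eapply filterdiff_ext_lin; [apply (filterdiff_comp' (fun t => (a, t)) F b (fun h => (0, h)))|].
  - apply (filterdiff_pair (fun _ => a) (fun t => t)); [exact (filterdiff_const a) | apply filterdiff_id].
  - exact HJ.
  - intros h. unfold M2_apply. cbn. unfold prod_scal, scal; simpl. unfold mult; simpl. f_equal; ring.
Qed.

Lemma is_derive_fst (F : R -> R * R) x l : is_derive F x l -> is_derive (fun t => fst (F t)) x (fst l).
Proof.
  intros HF. unfold is_derive.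
  eapply filterdiff_ext_lin; [apply (filterdiff_comp' F fst x _ fst HF)|].
  - apply filterdiff_linear, is_linear_fst.
  - reflexivity.
Qed.

Lemma is_derive_snd (F : R -> R * R) x l : is_derive F x l -> is_derive (fun t => snd (F t)) x (snd l).
Proof.
  intros HF. unfold is_derive.
  eapply filterdiff_ext_lin; [apply (filterdiff_comp' F snd x _ snd HF)|].
  - apply filterdiff_linear, is_linear_snd.
  - reflexivity.
Qed.

Lemma is_derive_right_affine g x l k d : 0 < d ->
  (forall t, 0 < t < d -> g (x + t) = g x + k * t) -> is_derive g x l -> l = k.
Proof.
  intros Hd Hg Hl. apply is_derive_Reals in Hl.
  destruct (Req_dec l k) as [E | NE]; [exact E|]. exfalso.
  destruct (Hl (Rabs (k - l))) as [del Hdel]; [apply Rabs_pos_lt; lra|].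
  pose proof (cond_pos del).
  set (t := Rmin d del / 2).
  assert (Ht : 0 < t < d /\ t < del).
  { assert (0 < Rmin d del) by (apply Rmin_glb_lt; lra).
    pose proof (Rmin_l d del). pose proof (Rmin_r d del). unfold t. lra. }
  specialize (Hdel t ltac:(lra) ltac:(rewrite Rabs_pos_eq; lra)).
  rewrite (Hg t) in Hdel by lra.
  replace ((g x + k * t - g x) / t - l) with (k - l) in Hdel by (field; lra). lra.
Qed.

Lemma derive_kink c x l : is_derive (fun t => pospart t * c - pospart (- t)) x l ->
  (0 <= x -> l = c) /\ (x < 0 -> l = 1).
Proof.
  intros Hl. unfold pospart in Hl. split; intros Hx.
  - refine (is_derive_right_affine _ x l c 1 Rlt_0_1 _ Hl).
    intros t Ht.
    rewrite (Rmax_left (x + t)), (Rmax_left x), (Rmax_right (- (x + t))), (Rmax_right (- x)) by lra.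
    ring.
  - refine (is_derive_right_affine _ x l 1 (- x) _ _ Hl); [lra|].
    intros t Ht.
    rewrite (Rmax_right (x + t)), (Rmax_right x), (Rmax_left (- (x + t))), (Rmax_left (- x)) by lra.
    ring.
Qed.

Lemma pospart_continuous x : continuous pospart x.
Proof. apply (continuous_ext (pospow 1)); [apply pospow_1 | apply pospow_continuous, Rlt_0_1]. Qed.

Lemma pospart_sq_continuous x : continuous (fun t => pospart t ^ 2) x.
Proof. apply (continuous_ext (pospow 2)); [apply pospow_2 | apply pospow_continuous; lra]. Qed.

Lemma pospart_sq_derive x : is_derive (fun t => pospart t ^ 2) x (2 * pospart x).
Proof.
  replace (2 * pospart x) with (2 * pospow (2 - 1) x).
  - apply (is_derive_ext (pospow 2)); [intros t; apply pospow_2 | apply pospow_derive; lra].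
  - replace (2 - 1) with 1 by ring. now rewrite pospow_1.
Qed.

Lemma pospart_sq_affine_derive c d x :
  is_derive (fun t => c * pospart t ^ 2 - d) x (2 * c * pospart x).
Proof.
  replace (2 * c * pospart x) with (minus (c * (2 * pospart x)) zero)
    by (unfold minus, plus, opp, zero; simpl; ring).
  exact (is_derive_minus _ (fun _ : R => d) x _ _
           (is_derive_scal _ x c _ (pospart_sq_derive x)) (is_derive_const d x)).
Qed.

Lemma grad_phi2 q : grad_phi 2 q =
  (pospart (fst q) * pospart (snd q) ^ 2 - pospart (- fst q),
   pospart (fst q) ^ 2 * pospart (snd q) - pospart (- snd q)).
Proof.
  unfold grad_phi. replace (2 - 1) with 1 by ring. rewrite !Rabs_negpart.
  pose proof pospow_1 as P1. pose proof pospow_2 as P2. unfold pospow in P1, P2.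
  now rewrite !P1, !P2.
Qed.

Lemma has_jac_grad_phi2 a b J : has_jac (grad_phi 2) (a, b) J ->
  (0 <= a -> m11 J = pospart b ^ 2) /\ (a < 0 -> m11 J = 1) /\
  m12 J = 2 * pospart a * pospart b /\ m21 J = 2 * pospart a * pospart b /\
  (0 <= b -> m22 J = pospart a ^ 2) /\ (b < 0 -> m22 J = 1).
Proof.
  intros HJ.
  pose proof (has_jac_partial_fst _ _ _ _ HJ) as Da.
  pose proof (has_jac_partial_snd _ _ _ _ HJ) as Db.
  assert (D11 : is_derive (fun t => pospart t * pospart b ^ 2 - pospart (- t)) a (m11 J))
    by (apply (is_derive_ext (fun t => fst (grad_phi 2 (t, b)))), (is_derive_fst _ _ _ Da);
        intros t; now rewrite grad_phi2).
  assert (D22 : is_derive (fun t => pospart t * pospart a ^ 2 - pospart (- t)) b (m22 J))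
    by (apply (is_derive_ext (fun t => snd (grad_phi 2 (a, t)))), (is_derive_snd _ _ _ Db);
        intros t; rewrite grad_phi2; simpl; ring).
  assert (D12 : is_derive (fun t => pospart a * pospart t ^ 2 - pospart (- a)) b (m12 J))
    by (apply (is_derive_ext (fun t => fst (grad_phi 2 (a, t)))), (is_derive_fst _ _ _ Db);
        intros t; now rewrite grad_phi2).
  assert (D21 : is_derive (fun t => pospart b * pospart t ^ 2 - pospart (- b)) a (m21 J))
    by (apply (is_derive_ext (fun t => snd (grad_phi 2 (t, b)))), (is_derive_snd _ _ _ Da);
        intros t; rewrite grad_phi2; simpl; ring).
  destruct (derive_kink _ _ _ D11) as [H11p H11n].
  destruct (derive_kink _ _ _ D22) as [H22p H22n].
  repeat split; try assumption.
  - rewrite <- (is_derive_unique _ _ _ D12), (is_derive_unique _ _ _ (pospart_sq_affine_derive _ _ _)). ring.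
  - rewrite <- (is_derive_unique _ _ _ D21), (is_derive_unique _ _ _ (pospart_sq_affine_derive _ _ _)). ring.
Qed.

Lemma is_lim_seq_continuous (f : R -> R) (u : nat -> R) (a : R) :
  continuous f a -> is_lim_seq u a -> is_lim_seq (fun k => f (u k)) (f a).
Proof. intros Hf Hu. exact (filterlim_comp _ _ _ u f _ _ _ Hu Hf). Qed.

Lemma is_lim_seq_eq (u : nat -> R) (l1 l2 : R) : is_lim_seq u l1 -> is_lim_seq u l2 -> l1 = l2.
Proof.
  intros H1 H2. apply is_lim_seq_unique in H1, H2. rewrite H1 in H2. now injection H2.
Qed.

Lemma Xi_of_lim (x y u : nat -> R) (a b U : R) :
  is_lim_seq x a -> is_lim_seq y b -> is_lim_seq u U ->
  (forall k, 0 <= x k -> u k = pospart (y k) ^ 2) -> (forall k, x k < 0 -> u k = 1) ->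
  Xi a b U.
Proof.
  intros Hx Hy HU Hpos Hneg.
  assert (Hsq : is_lim_seq (fun k => pospart (y k) ^ 2) (pospart b ^ 2))
    by (apply (is_lim_seq_continuous (fun t => pospart t ^ 2)); [apply pospart_sq_continuous | exact Hy]).
  unfold Xi. destruct (Rtotal_order a 0) as [Ha | [Ha | Ha]].
  - right; right. split; [exact Ha|].
    apply (is_lim_seq_eq u); [exact HU|].
    apply (is_lim_seq_ext_loc (fun _ => 1)); [|apply is_lim_seq_const].
    eapply filter_imp; [|exact (Hx (fun t => t < 0) (open_lt 0 a Ha))].
    intros k Hk. symmetry. apply Hneg, Hk.
  - right; left. split; [exact Ha|].
    assert (E : (U - 1) * (U - pospart b ^ 2) = 0).
    { apply (is_lim_seq_eq (fun k => (u k - 1) * (u k - pospart (y k) ^ 2))).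
      - apply is_lim_seq_mult'; apply is_lim_seq_minus'; auto using is_lim_seq_const.
      - apply (is_lim_seq_ext (fun _ => 0)); [|apply is_lim_seq_const].
        intros k. destruct (Rlt_or_le (x k) 0) as [Hk | Hk].
        + rewrite Hneg by exact Hk. ring.
        + rewrite Hpos by exact Hk. ring. }
    apply Rmult_integral in E. destruct E as [E | E].
    + replace U with 1 by lra. split; [apply Rmin_l | apply Rmax_l].
    + replace U with (pospart b ^ 2) by lra. split; [apply Rmin_r | apply Rmax_r].
  - left. split; [exact Ha|].
    apply (is_lim_seq_eq u); [exact HU|].
    apply (is_lim_seq_ext_loc (fun k => pospart (y k) ^ 2)); [|exact Hsq].
    eapply filter_imp; [|exact (Hx (fun t => 0 < t) (open_gt 0 a Ha))].
    intros k Hk. symmetry. apply Hpos. simpl in Hk. lra.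
Qed.

Lemma limiting_jacobians_grad_phi2 a b M : limiting_jacobians (grad_phi 2) (a, b) M ->
  Xi a b (m11 M) /\ Xi b a (m22 M) /\
  m12 M = 2 * pospart a * pospart b /\ m21 M = 2 * pospart a * pospart b.
Proof.
  intros [xs [Js [Hxs [HJ [L11 [L12 [L21 L22]]]]]]].
  pose proof (filterlim_comp _ _ _ xs fst _ _ _ Hxs (continuous_fst a b)) as La.
  pose proof (filterlim_comp _ _ _ xs snd _ _ _ Hxs (continuous_snd a b)) as Lb.
  assert (HJ' : forall k, has_jac (grad_phi 2) (fst (xs k), snd (xs k)) (Js k))
    by (intros k; rewrite <- surjective_pairing; apply HJ).
  set (c k := 2 * pospart (fst (xs k)) * pospart (snd (xs k))).
  assert (Hc : is_lim_seq c (2 * pospart a * pospart b))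
    by (apply is_lim_seq_mult'; [apply is_lim_seq_mult'; [apply is_lim_seq_const|]|];
        apply is_lim_seq_continuous; auto using pospart_continuous).
  repeat split.
  - apply (Xi_of_lim _ _ _ _ _ _ La Lb L11); intros k; apply (has_jac_grad_phi2 _ _ _ (HJ' k)).
  - apply (Xi_of_lim _ _ _ _ _ _ Lb La L22); intros k; apply (has_jac_grad_phi2 _ _ _ (HJ' k)).
  - apply (is_lim_seq_eq _ _ _ L12), (is_lim_seq_ext c); [|exact Hc].
    intros k. symmetry. apply (has_jac_grad_phi2 _ _ _ (HJ' k)).
  - apply (is_lim_seq_eq _ _ _ L21), (is_lim_seq_ext c); [|exact Hc].
    intros k. symmetry. apply (has_jac_grad_phi2 _ _ _ (HJ' k)).
Qed.

Definition M2_wsum (f : M2 -> R) (l : list (R * M2)%type) : R :=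
  fold_right (fun wA acc => fst wA * f (snd wA) + acc) 0 l.

Definition total_weight (l : list (R * M2)%type) : R := fold_right Rplus 0 (map fst l).

Lemma M2_combination_entries l :
  fold_right (fun wA acc => M2_add (M2_scale (fst wA) (snd wA)) acc) M2_zero l =
  mkM2 (M2_wsum m11 l) (M2_wsum m12 l) (M2_wsum m21 l) (M2_wsum m22 l).
Proof. induction l as [|wA l IH]; [reflexivity|]. simpl. now rewrite IH. Qed.

Lemma M2_wsum_bounds (f : M2 -> R) (lo hi : R) (l : list (R * M2)%type) :
  List.Forall (fun wA => 0 <= fst wA /\ lo <= f (snd wA) <= hi) l ->
  total_weight l * lo <= M2_wsum f l <= total_weight l * hi.
Proof.
  unfold total_weight. induction 1 as [|[w A] l [Hw HA] _ IH]; simpl in *; [lra|].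
  pose proof (Rmult_le_compat_l w _ _ Hw (proj1 HA)).
  pose proof (Rmult_le_compat_l w _ _ Hw (proj2 HA)). nra.
Qed.

Lemma M2_wsum_const (f : M2 -> R) (c : R) (l : list (R * M2)%type) :
  List.Forall (fun wA => f (snd wA) = c) l -> M2_wsum f l = total_weight l * c.
Proof.
  unfold total_weight. induction 1 as [|[w A] l HA _ IH]; simpl in *; [ring|]. rewrite HA, IH. ring.
Qed.

Definition Xi_lo (a b : R) : R :=
  if Rlt_dec 0 a then pospart b ^ 2 else if Rlt_dec a 0 then 1 else Rmin 1 (pospart b ^ 2).
Definition Xi_hi (a b : R) : R :=
  if Rlt_dec 0 a then pospart b ^ 2 else if Rlt_dec a 0 then 1 else Rmax 1 (pospart b ^ 2).

Lemma Xi_interval a b u : Xi a b u <-> Xi_lo a b <= u <= Xi_hi a b.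
Proof.
  unfold Xi, Xi_lo, Xi_hi. destruct (Rlt_dec 0 a); [|destruct (Rlt_dec a 0)].
  - split; [intros [[_ H] | [[H _] | [H _]]]; lra | intros H; left; split; lra].
  - split; [intros [[H _] | [[H _] | [_ H]]]; lra | intros H; right; right; split; lra].
  - split; [intros [[H _] | [[_ H] | [H _]]]; lra | intros H; right; left; split; [lra | exact H]].
Qed.

Lemma clarke_jac_grad_phi2 a b M : clarke_jac (grad_phi 2) (a, b) M ->
  exists u v, Xi a b u /\ Xi b a v /\
    M = mkM2 u (2 * pospart a * pospart b) (2 * pospart a * pospart b) v.
Proof.
  intros [l [Hl [Hw ->]]]. fold (total_weight l) in Hw. rewrite M2_combination_entries.
  set (c := 2 * pospart a * pospart b).
  assert (HQ : List.Forall (fun wA => 0 <= fst wA /\ Xi a b (m11 (snd wA)) /\ Xi b a (m22 (snd wA))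
                                     /\ m12 (snd wA) = c /\ m21 (snd wA) = c) l).
  { eapply List.Forall_impl; [|exact Hl]. intros wA [Hw0 HA].
    split; [exact Hw0 | apply limiting_jacobians_grad_phi2, HA]. }
  assert (B11 : total_weight l * Xi_lo a b <= M2_wsum m11 l <= total_weight l * Xi_hi a b).
  { apply M2_wsum_bounds. eapply List.Forall_impl; [|exact HQ].
    intros wA (Hw0 & H11 & _). split; [exact Hw0 | apply Xi_interval, H11]. }
  assert (B22 : total_weight l * Xi_lo b a <= M2_wsum m22 l <= total_weight l * Xi_hi b a).
  { apply M2_wsum_bounds. eapply List.Forall_impl; [|exact HQ].
    intros wA (Hw0 & _ & H22 & _). split; [exact Hw0 | apply Xi_interval, H22]. }
  assert (E12 : M2_wsum m12 l = total_weight l * c).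
  { apply M2_wsum_const. eapply List.Forall_impl; [|exact HQ]. intros wA (_ & _ & _ & H12 & _). exact H12. }
  assert (E21 : M2_wsum m21 l = total_weight l * c).
  { apply M2_wsum_const. eapply List.Forall_impl; [|exact HQ]. intros wA (_ & _ & _ & _ & H21). exact H21. }
  rewrite Hw in B11, B22, E12, E21. rewrite E12, E21.
  exists (M2_wsum m11 l), (M2_wsum m22 l). rewrite !Xi_interval.
  repeat split; try lra. f_equal; ring.
Qed.

Theorem proposition2p2 :
  (forall r : R, 2 <= r ->
     C1_with_grad (phi r) (grad_phi r) /\
     (forall p : R * R, grad_phi r p = (0, 0) <-> phi r p = 0)) /\
  (forall r : R, 2 < r -> C2_with_hess (phi r) (grad_phi r) (hess_phi r)) /\
  (forall (p : R * R) (M : M2), clarke_jac (grad_phi 2) p M ->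
     exists u v : R, Xi (fst p) (snd p) u /\ Xi (snd p) (fst p) v /\
       M = mkM2 u (2 * pospart (fst p) * pospart (snd p)) (2 * pospart (fst p) * pospart (snd p)) v).
Proof.
  assert (HC1 : forall r, 1 < r -> C1_with_grad (phi r) (grad_phi r))
    by (intros r Hr; split; intros p; [apply phi_has_grad | apply grad_phi_continuous]; exact Hr).
  split; [|split].
  - intros r Hr. split; [apply HC1; lra|].
    intros [a b]. rewrite grad_phi_eq0_iff, phi_eq0_iff by lra. reflexivity.
  - intros r Hr. split; [apply HC1; lra|].
    split; [intros p; apply grad_phi_has_jac, Hr | apply hess_phi_continuous, Hr].
  - intros [a b] M. apply clarke_jac_grad_phi2.
Qed.
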